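(* Let $G_{\mathrm{inv}}$ be the $q$-grammar with master variables $S=\{x,y\}$, rule $x_j\mapsto q^jy_jx_{j+1}$, $y_j\mapsto q^jy_jx_{j+1}$, and order AIO, with $q$-derivative $D$, and let $\phi$ be the evaluation $\phi(x_j)=x$, $\phi(y_j)=y$ for all $j$ (into the field of rational functions in commuting indeterminates $q,x,y$ over $\mathbb{K}$). Then for every $i\ge0$, as formal power series in $u$, \[ \phi\big(\mathrm{Gen}^{(G_{\mathrm{inv}})}_q(x_i^{-1};u)\big)=\frac{1-x^{-1}y\,e_q\big((x-y)uq^i\big)}{x-y},\qquad \phi\big(\mathrm{Gen}^{(G_{\mathrm{inv}})}_q(y_i^{-1};u)\big)=\frac{1-xy^{-1}\,E_q\big((y-x)uq^i\big)}{y-x}. \]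
   Context: Let $\mathbb{K}$ be a commutative ring with unity and characteristic zero, $q$ an indeterminate. For a set $S$ of master variables, $\mathbb{S}=\{s_i:s\in S,\ i\ge0\}$ is a set of non-commuting variables, $F(\mathbb{S})$ the free group on $\mathbb{S}$ and $\mathbb{E}=\mathbb{K}[q][F(\mathbb{S})]$ its group algebra. A rule $R$ assigns to each $s_i$ an element $R(s_i)\in\mathbb{E}$, extended by $R(s_i^{-1})=-s_i^{-1}R(s_i)s_{i+1}^{-1}$. The up-arrow $\uparrow$ is the linear map replacing each letter $s_i^{\pm1}$ by $s_{i+1}^{\pm1}$. An order rewrites each word by permuting its letters; AIO stably reorders letters according to the position of their underlying variable in $x_0,y_0,x_1,y_1,\dots$. The $q$-derivative of a $q$-grammar $(S,R,\rho)$ is the $\mathbb{K}[q]$-linear map with $D(w_1\cdots w_n)=\sum_{j=1}^n\rho\big(w_1\cdots w_{j-1}R(w_j)\uparrow(w_{j+1}\cdots w_n)\big)$ for letters $w_j\in\mathbb{S}\cup\mathbb{S}^{-1}$, $D^0=\mathrm{id}$, $D^k=D\circ D^{k-1}$. An evaluation extends to a $\mathbb{K}[q]$-linear ring morphism with $\phi(s_i^{-1})=\phi(s_i)^{-1}$. $\mathrm{Gen}^{(G)}_q(f;u)=\sum_{n\ge0}D^n(f)\,u^n/(q;q)_n$ with $(q;q)_n=\prod_{i=1}^n(1-q^i)$, and $\phi$ is applied coefficientwise. $e_q(u)=\sum_{n\ge0}u^n/(q;q)_n$, $E_q(u)=\sum_{n\ge0}q^{\binom n2}u^n/(q;q)_n$.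 *)

From HB Require Import structures.
From mathcomp Require Import all_boot all_order all_algebra.
Set Implicit Arguments. Unset Strict Implicit. Unset Printing Implicit Defensive.
Import Order.TTheory GRing.Theory Num.Theory.
Local Open Scope ring_scope.

Section QGrammar.
Variables (K : comRingType) (S : eqType).

(* A letter s_i^{+1} is (s, i, true); s_i^{-1} is (s, i, false). *)
Definition letter := (S * nat * bool)%type.
(* Words in the letters of SS ∪ SS^{-1}; elements of the free group F(SS)
   are represented by their (freely) reduced words. *)
Definition word := seq letter.
(* An element of E = K[q][F(SS)] is represented as a finite formal sum
   sum_k c_k w_k, given as the list of pairs (c_k, w_k), c_k in K[q]. *)
Definition elt := seq ({poly K} * word).

Definition inv_letter (a : letter) : letter := (a.1.1, a.1.2, ~~ a.2).

Definition reduce (w : word) : word :=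
  foldr (fun a r => if r is b :: r' then (if b == inv_letter a then r' else a :: r)
                    else [:: a]) [::] w.

Definition up_letter (a : letter) : letter := (a.1.1, a.1.2.+1, a.2).
Definition up (w : word) : word := map up_letter w.

Definition lmul (w : word) (e : elt) : elt := map (fun t => (t.1, reduce (w ++ t.2))) e.
Definition rmul (e : elt) (w : word) : elt := map (fun t => (t.1, reduce (t.2 ++ w))) e.
Definition scale (c : {poly K}) (e : elt) : elt := map (fun t => (c * t.1, t.2)) e.

Definition rule_ext (R : S -> nat -> elt) (a : letter) : elt :=
  let: (s, i, b) := a in
  if b then R s i
  else scale (-1) (rmul (lmul [:: (s, i, false)] (R s i)) [:: (s, i.+1, false)]).

(* sum_j  w_1...w_{j-1} R(w_j) up(w_{j+1}...w_n), with pre = w_1..w_{j-1}. *)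
Fixpoint dword (R : S -> nat -> elt) (pre : word) (w : word) : elt :=
  match w with
  | [::] => [::]
  | a :: w' => rmul (lmul pre (rule_ext R a)) (up w') ++ dword R (rcons pre a) w'
  end.

Definition qder (R : S -> nat -> elt) (rho : word -> word) (e : elt) : elt :=
  flatten [seq scale t.1 (map (fun u => (u.1, rho u.2)) (dword R [::] t.2)) | t <- e].

Definition qderN R rho (n : nat) (e : elt) : elt := iter n (qder R rho) e.

Section Eval.
Variables (F : fieldType) (inK : K -> F) (qF : F) (v : S -> nat -> F).
Definition eval_letter (a : letter) : F :=
  if a.2 then v a.1.1 a.1.2 else (v a.1.1 a.1.2)^-1.
Definition eval_word (w : word) : F := \prod_(a <- w) eval_letter a.
Definition eval (e : elt) : F :=
  \sum_(t <- e) (map_poly inK t.1).[qF] * eval_word t.2.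
End Eval.
End QGrammar.

Section FPS.
Variable F : fieldType.
Definition fps := nat -> F.
Definition fps_const (c : F) : fps := fun n => if n is 0 then c else 0.
Definition fps_sub (f g : fps) : fps := fun n => f n - g n.
Definition fps_scale (c : F) (f : fps) : fps := fun n => c * f n.

Definition qpoch (q : F) (n : nat) : F := \prod_(1 <= k < n.+1) (1 - q ^+ k).
Definition e_q (q c : F) : fps := fun n => c ^+ n / qpoch q n.
Definition E_q (q c : F) : fps := fun n => q ^+ 'C(n, 2) * c ^+ n / qpoch q n.
End FPS.

Definition Gen (K : comRingType) (S : eqType) (R : S -> nat -> elt K S)
  (rho : word S -> word S) (F : fieldType) (inK : K -> F) (qF : F)
  (v : S -> nat -> F) (f : elt K S) : fps F :=
  fun n => eval inK qF v (qderN R rho n f) / qpoch qF n.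

Inductive mvar := mx | my.
Definition mvar_eqb (a b : mvar) : bool :=
  match a, b with mx, mx | my, my => true | _, _ => false end.
Lemma mvar_eqP : Equality.axiom mvar_eqb.
Proof. by case; case; constructor. Qed.
HB.instance Definition _ := hasDecEq.Build mvar mvar_eqP.

Definition R_inv (K : comRingType) (s : mvar) (j : nat) : elt K mvar :=
  [:: ('X ^+ j, [:: (my, j, true); (mx, j.+1, true)])].

(* AIO: position of the underlying variable in x_0, y_0, x_1, y_1, ... *)
Definition aio_key (a : letter mvar) : nat := (a.1.2).*2 + (a.1.1 == my).
(* stable reordering (MathComp's sort is stable), then the group element *)
Definition rho_AIO (w : word mvar) : word mvar :=
  reduce (sort (fun a b => aio_key a <= aio_key b)%N w).

Definition RF (K : idomainType) := {fraction {poly {poly {poly K}}}}.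
Definition xRF (K : idomainType) : RF K := FracField.tofrac ('X : {poly {poly {poly K}}}).
Definition yRF (K : idomainType) : RF K := FracField.tofrac (('X)%:P : {poly {poly {poly K}}}).
Definition qRF (K : idomainType) : RF K := FracField.tofrac (('X)%:P%:P : {poly {poly {poly K}}}).
Definition KtoRF (K : idomainType) (k : K) : RF K := FracField.tofrac (k%:P%:P%:P).

Definition v_inv (K : idomainType) (s : mvar) (j : nat) : RF K :=
  if s is mx then xRF K else yRF K.

Definition Gen_inv (K : idomainType) (f : elt K mvar) : fps (RF K) :=
  Gen (@R_inv K) rho_AIO (@KtoRF K) (qRF K) (@v_inv K) f.

(* Since x_j and y_j have the same rule, the terms that D produces from the two letters of
   a difference x_j - y_j cancel, whatever surrounds it.  As free reduction and the AIO order
   act trivially on all the words involved, this gives, for P = (x_(i+1) - y_(i+1)) ...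
   (x_(i+n) - y_(i+n)) and Q = (y_(i+1) - x_(i+1)) ... (y_(k-1) - x_(k-1)),
     D(x_i^-1) = -q^i x_i^-1 y_i,
     D(x_i^-1 y_i P) = q^i x_i^-1 y_i (x_(i+1) - y_(i+1)) up(P),
     D(y_i^-1) = -q^i x_(i+1) y_(i+1)^-1,
     D(Q x_k y_k^-1) = q^k Q (y_k - x_k) x_(k+1) y_(k+1)^-1.
   Iterating and evaluating, phi(D^n x_i^-1) = -q^(i n) x^-1 y (x - y)^(n-1) and
   phi(D^n y_i^-1) = -q^(i n + C(n,2)) x y^-1 (y - x)^(n-1) for n >= 1: these are the
   coefficients of the two series. *)
From HB Require Import structures.
From mathcomp Require Import all_boot all_order all_algebra.
From mathcomp Require Import ring zify.
From Stdlib Require Import FunctionalExtensionality.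
Import GRing.Theory.
Set Implicit Arguments. Unset Strict Implicit. Unset Printing Implicit Defensive.
Local Open Scope ring_scope.

Arguments reduce : simpl never.


Section FreeReduction.
Variable S : eqType.
Implicit Types (a : letter S) (s t w : word S).

Definition reduce_step a w : word S :=
  if w is b :: w' then (if b == inv_letter a then w' else a :: w) else [:: a].

Definition reduced w := sorted (fun a b => b != inv_letter a) w.

Lemma inv_letterK : involutive (@inv_letter S).
Proof. by case=> [[s i] b]; rewrite /inv_letter /= negbK. Qed.

Lemma reduce_cons a w : reduce (a :: w) = reduce_step a (reduce w).
Proof. by []. Qed.

Lemma reduced_step a w : reduced w -> reduced (reduce_step a w).
Proof.
case: w => [|b w] //= rw; case: ifP => [_ | /negbT nb]; first exact: path_sorted rw.
by rewrite /= nb.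
Qed.

Lemma reduce_reduced w : reduced (reduce w).
Proof. by elim: w => [|a w IH] //; exact: reduced_step. Qed.

Lemma reduce_id w : reduced w -> reduce w = w.
Proof.
elim: w => [|a w IH] // rw; rewrite reduce_cons IH; last exact: path_sorted rw.
by case: w rw {IH} => [|b w] //= /andP[/negbTE-> _].
Qed.

Lemma reduce_stepK a w : reduced w -> reduce_step a (reduce_step (inv_letter a) w) = w.
Proof.
case: w => [|b w] /=; first by rewrite eqxx.
rewrite inv_letterK; case: eqP => [-> | _] /=; last by rewrite eqxx.
by case: w => [|c w] //= /andP[/negbTE-> _].
Qed.

Lemma foldr_step_reduce s w : reduced w ->
  foldr reduce_step w (reduce s) = foldr reduce_step w s.
Proof.
move=> rw; elim: s => [|a s IH] //=; rewrite -IH reduce_cons.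
case: (reduce s) (reduce_reduced s) => [|b v] //= _; case: ifP => // /eqP->.
rewrite reduce_stepK //; elim: v => //= c v; exact: reduced_step.
Qed.

Lemma reduce_cat s t : reduce (s ++ t) = foldr reduce_step (reduce t) s.
Proof. by rewrite /reduce foldr_cat. Qed.

Lemma reduce_catl s t : reduce (reduce s ++ t) = reduce (s ++ t).
Proof. by rewrite !reduce_cat foldr_step_reduce // reduce_reduced. Qed.

Lemma reduce_catr s t : reduce (s ++ reduce t) = reduce (s ++ t).
Proof. by rewrite !reduce_cat reduce_id // reduce_reduced. Qed.

Lemma reduce_cancel s a t : reduce (s ++ [:: a, inv_letter a & t]) = reduce (s ++ t).
Proof. by rewrite !reduce_cat !reduce_cons reduce_stepK ?reduce_reduced. Qed.

End FreeReduction.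

Section QDerivative.
Variables (K : comNzRingType) (S : eqType).
Implicit Types (e : elt K S) (p w : word S).

Fixpoint prod_diff (s1 s2 : S) (k n : nat) : elt K S :=
  if n is n'.+1 then
    [seq (t.1, (s1, k, true) :: t.2) | t <- prod_diff s1 s2 k.+1 n'] ++
    [seq (- t.1, (s2, k, true) :: t.2) | t <- prod_diff s1 s2 k.+1 n']
  else [:: (1, [::])].

Fixpoint pos_run (k : nat) w : bool :=
  if w is a :: w' then [&& a.1.2 == k, a.2 & pos_run k.+1 w'] else true.

Lemma pos_run_up k w : pos_run k w -> pos_run k.+1 (up w).
Proof. by elim: w k => [|a w IH] k //= /and3P[/eqP-> -> /IH->]; rewrite eqxx. Qed.

Lemma prod_diff_pos_run s1 s2 k n t :
  t \in prod_diff s1 s2 k n -> pos_run k t.2 /\ size t.2 = n.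
Proof.
elim: n k t => [|n IH] k t /=; first by rewrite inE => /eqP->.
by rewrite mem_cat => /orP[] /mapP[[c w] /IH[rw <-] ->] /=; rewrite eqxx rw.
Qed.

Variables (R : S -> nat -> elt K S) (rho : word S -> word S).

Lemma qder_cat e1 e2 : qder R rho (e1 ++ e2) = qder R rho e1 ++ qder R rho e2.
Proof. by rewrite /qder map_cat flatten_cat. Qed.

Lemma qder_scale c e : qder R rho (scale c e) = scale c (qder R rho e).
Proof.
rewrite /qder /scale map_flatten -!map_comp; congr flatten.
by apply: eq_map => t /=; rewrite -!map_comp; apply: eq_map => u /=; rewrite mulrA.
Qed.

Lemma qderN_cat n e1 e2 :
  qderN R rho n (e1 ++ e2) = qderN R rho n e1 ++ qderN R rho n e2.
Proof. by rewrite /qderN; elim: n => //= n ->; rewrite qder_cat. Qed.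

Lemma qderN_scale n c e : qderN R rho n (scale c e) = scale c (qderN R rho n e).
Proof. by rewrite /qderN; elim: n => //= n ->; rewrite qder_scale. Qed.

Lemma qderN_nil n : qderN R rho n [::] = [::].
Proof. by rewrite /qderN; elim: n => //= n ->. Qed.

Lemma rmul_cat e1 e2 w : rmul (e1 ++ e2) w = rmul e1 w ++ rmul e2 w.
Proof. exact: map_cat. Qed.

Lemma rmul_rmul e w w' : rmul (rmul e w) w' = rmul e (w ++ w').
Proof. by rewrite /rmul -map_comp; apply: eq_map => t /=; rewrite reduce_catl catA. Qed.

Lemma dword_cons p a w :
  dword R p (a :: w) = rmul (lmul p (rule_ext R a)) (up w) ++ dword R (rcons p a) w.
Proof. by []. Qed.

Lemma dword_cat p w w' :
  dword R p (w ++ w') = rmul (dword R p w) (up w') ++ dword R (p ++ w) w'.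
Proof.
elim: w p => [|a w IH] p /=; first by rewrite cats0.
by rewrite IH /up map_cat -/(up _) -/(up _) rmul_cat rmul_rmul catA cat_rcons.
Qed.

Variables (F : fieldType) (inK : {rmorphism K -> F}) (q : F) (v : S -> nat -> F).

Definition qeval (c : {poly K}) : F := (map_poly inK c).[q].

Lemma qevalM a b : qeval (a * b) = qeval a * qeval b.
Proof. by rewrite /qeval rmorphM hornerM. Qed.

Lemma qevalN a : qeval (- a) = - qeval a.
Proof. by rewrite /qeval rmorphN hornerN. Qed.

Lemma qeval1 : qeval 1 = 1.
Proof. by rewrite /qeval rmorph1 hornerC. Qed.

Lemma qevalXn j : qeval ('X ^+ j) = q ^+ j.
Proof. by rewrite /qeval map_polyXn hornerXn. Qed.

Definition lin_ext (g : word S -> F) e : F := \sum_(t <- e) qeval t.1 * g t.2.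

Lemma lin_ext_nil g : lin_ext g [::] = 0.
Proof. exact: big_nil. Qed.

Lemma lin_ext_cat g e1 e2 : lin_ext g (e1 ++ e2) = lin_ext g e1 + lin_ext g e2.
Proof. exact: big_cat. Qed.

Lemma lin_ext_seq1 g c w : lin_ext g [:: (c, w)] = qeval c * g w.
Proof. exact: big_seq1. Qed.

Lemma lin_ext_scale g c e : lin_ext g (scale c e) = qeval c * lin_ext g e.
Proof.
rewrite /lin_ext big_map big_distrr; apply: eq_bigr => t _ /=.
by rewrite qevalM mulrA.
Qed.

Lemma lin_ext_rmul g e w :
  lin_ext g (rmul e w) = lin_ext (fun u => g (reduce (u ++ w))) e.
Proof. exact: big_map. Qed.

Lemma eq_in_lin_ext g g' e :
  (forall t, t \in e -> g t.2 = g' t.2) -> lin_ext g e = lin_ext g' e.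
Proof.
move=> gg'; rewrite /lin_ext big_seq_cond [RHS]big_seq_cond.
by apply: eq_bigr => t /andP[/gg'->].
Qed.

Lemma eq_lin_ext g g' e : g =1 g' -> lin_ext g e = lin_ext g' e.
Proof. by move=> gg'; apply: eq_in_lin_ext => t _; exact: gg'. Qed.

Lemma lin_extD g g' e :
  lin_ext (fun w => g w + g' w) e = lin_ext g e + lin_ext g' e.
Proof. by rewrite /lin_ext -big_split; apply: eq_bigr => t _; rewrite mulrDr. Qed.

Lemma lin_extB g g' e :
  lin_ext (fun w => g w - g' w) e = lin_ext g e - lin_ext g' e.
Proof. by rewrite /lin_ext -sumrB; apply: eq_bigr => t _; rewrite mulrBr. Qed.

Lemma lin_extZ a g e : lin_ext (fun w => a * g w) e = a * lin_ext g e.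
Proof. by rewrite /lin_ext big_distrr; apply: eq_bigr => t _; rewrite mulrCA. Qed.

Lemma eq_in_prod_diff g g' s1 s2 k n :
  (forall w, pos_run k w -> size w = n -> g w = g' w) ->
  lin_ext g (prod_diff s1 s2 k n) = lin_ext g' (prod_diff s1 s2 k n).
Proof. by move=> gg'; apply: eq_in_lin_ext => t /prod_diff_pos_run[]; exact: gg'. Qed.

Lemma lin_ext_prod_diff0 g s1 s2 k : lin_ext g (prod_diff s1 s2 k 0) = g [::].
Proof. by rewrite lin_ext_seq1 qeval1 mul1r. Qed.

Lemma lin_ext_prod_diffS g s1 s2 k n :
  lin_ext g (prod_diff s1 s2 k n.+1) =
  lin_ext (fun w => g ((s1, k, true) :: w)) (prod_diff s1 s2 k.+1 n)
  - lin_ext (fun w => g ((s2, k, true) :: w)) (prod_diff s1 s2 k.+1 n).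
Proof.
rewrite lin_ext_cat /lin_ext !big_map -sumrN; congr (_ + _).
by apply: eq_bigr => t _; rewrite qevalN mulNr.
Qed.

Lemma lin_ext_prod_diffSr g s1 s2 k n :
  lin_ext g (prod_diff s1 s2 k n.+1) =
  lin_ext (fun w => g (rcons w (s1, (k + n)%N, true)) - g (rcons w (s2, (k + n)%N, true)))
    (prod_diff s1 s2 k n).
Proof.
elim: n k g => [|n IH] k g.
  by rewrite lin_ext_prod_diffS !lin_ext_prod_diff0 addn0.
rewrite [RHS]lin_ext_prod_diffS [LHS]lin_ext_prod_diffS !IH addSnnS.
by rewrite !lin_extB.
Qed.

Lemma lin_ext_prod_diff_up g s1 s2 k n :
  lin_ext (fun w => g (up w)) (prod_diff s1 s2 k n) = lin_ext g (prod_diff s1 s2 k.+1 n).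
Proof.
elim: n k g => [|n IH] k g; first by rewrite !lin_ext_prod_diff0.
by rewrite !lin_ext_prod_diffS -!IH.
Qed.

Lemma lin_ext_prod_diff_eval s1 s2 k n :
  lin_ext (eval_word v) (prod_diff s1 s2 k n) = \prod_(k <= j < k + n) (v s1 j - v s2 j).
Proof.
elim: n k => [|n IH] k; first by rewrite lin_ext_prod_diff0 addn0 big_geq // /eval_word big_nil.
rewrite lin_ext_prod_diffS big_ltn; last by rewrite addnS ltnS leq_addr.
rewrite -addSnnS -IH mulrBl -!lin_extZ.
by congr (_ - _); apply: eq_lin_ext => w; rewrite /eval_word big_cons.
Qed.

Lemma lin_ext_prod_diff_dword g p s1 s2 k n : R s1 =1 R s2 ->
  lin_ext (fun w => lin_ext g (dword R p w)) (prod_diff s1 s2 k n) = 0.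
Proof.
move=> R12; elim: n k p => [|n IH] k p; first by rewrite lin_ext_prod_diff0 lin_ext_nil.
rewrite lin_ext_prod_diffS /= -lin_extB.
transitivity (lin_ext (fun w => lin_ext g (dword R (rcons p (s1, k, true)) w)
  - lin_ext g (dword R (rcons p (s2, k, true)) w)) (prod_diff s1 s2 k.+1 n)).
  by apply: eq_lin_ext => w; rewrite !lin_ext_cat R12; ring.
by rewrite lin_extB !IH subrr.
Qed.

Definition phiD (m : nat) w : F := eval inK q v (qderN R rho m [:: (1, w)]).

Lemma eval_lin_ext e : eval inK q v e = lin_ext (eval_word v) e.
Proof. by []. Qed.

Lemma eval_qderN m e : eval inK q v (qderN R rho m e) = lin_ext (phiD m) e.
Proof.
elim: e => [|[c w] e IH]; first by rewrite qderN_nil eval_lin_ext !lin_ext_nil.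
rewrite -cat1s qderN_cat eval_lin_ext !lin_ext_cat -!eval_lin_ext IH; congr (_ + _).
have -> : [:: (c, w)] = scale c [:: (1, w)] by rewrite /scale /= mulr1.
by rewrite qderN_scale eval_lin_ext !lin_ext_scale lin_ext_seq1 qeval1 mul1r.
Qed.

Lemma phiD0 w : phiD 0 w = eval_word v w.
Proof. by rewrite /phiD /eval /= big_seq1 -/(qeval _) qeval1 mul1r. Qed.

Lemma phiDS m w : phiD m.+1 w = lin_ext (fun u => phiD m (rho u)) (dword R [::] w).
Proof.
rewrite /phiD /qderN iterSr -/(qderN _ _ _ _) eval_qderN /qder /= cats0.
by rewrite lin_ext_scale qeval1 mul1r /lin_ext big_map.
Qed.

End QDerivative.

Arguments prod_diff {K S}.

Definition aio_lt (a b : letter mvar) : bool := (aio_key a < aio_key b)%N.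

Lemma aio_lt_reduced w : sorted aio_lt w -> reduced w.
Proof.
apply: sub_sorted => a b; apply: contraTneq => ->.
by rewrite /aio_lt /aio_key ltnn.
Qed.

Lemma rho_AIO_reduce w : sorted aio_lt w -> rho_AIO (reduce w) = w.
Proof.
move=> sw; have red_w := reduce_id (aio_lt_reduced sw).
have sw_le : sorted (fun a b => aio_key a <= aio_key b)%N w.
  by apply: sub_sorted sw => a b; exact: ltnW.
rewrite /rho_AIO red_w sorted_sort // => b a c; exact: leq_trans.
Qed.

Lemma pos_run_path_cat a k w t : pos_run k w -> (aio_key a < k.*2)%N ->
  (forall b, aio_key b < (k + size w).*2 -> path aio_lt b t)%N ->
  path aio_lt a (w ++ t).
Proof.
elim: w a k => [|b w IH] a k /=; first by rewrite addn0 => _ ha; apply.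
case/and3P=> /eqP bk _ rw ha ht; apply/andP; split.
  by rewrite /aio_lt {2}/aio_key bk ltn_addr.
apply: IH rw _ _; first by rewrite /aio_key bk; case: (_ == my); lia.
by move=> c; rewrite addSnnS; exact: ht.
Qed.

Lemma rho_AIO_xinv_y_run i W : pos_run i.+1 W ->
  rho_AIO (reduce [:: (mx, i, false), (my, i, true) & W])
  = [:: (mx, i, false), (my, i, true) & W].
Proof.
move=> rW; apply: rho_AIO_reduce; rewrite /= {1}/aio_lt /aio_key /= addn0 addn1 ltnSn.
rewrite -[W]cats0; apply: pos_run_path_cat rW _ _ => [|b _] //.
by rewrite /aio_key /= doubleS addn1.
Qed.

Lemma rho_AIO_run_x_yinv k w z j : pos_run k w -> j = (k + size w)%N ->
  rho_AIO (reduce (w ++ [:: (z, j, true); (mx, j.+1, true); (my, j.+1, false)]))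
  = w ++ [:: (z, j, true); (mx, j.+1, true); (my, j.+1, false)].
Proof.
move=> rw ->; apply: rho_AIO_reduce.
have tail_path b l : (aio_key b < l.*2)%N ->
    path aio_lt b [:: (z, l, true); (mx, l.+1, true); (my, l.+1, false)].
  by rewrite /= /aio_lt /aio_key /=; case: (z == my); lia.
case: w rw => [|a w] /=.
  by move=> _; rewrite /aio_lt /aio_key /=; case: (z == my); lia.
case/and3P=> /eqP ak _ rw; apply: pos_run_path_cat rw _ _.
  by rewrite /aio_key ak; case: (_ == my); lia.
by move=> b; rewrite addSnnS; exact: tail_path.
Qed.

Section InverseGrammar.
Variables (K : idomainType) (F : fieldType) (inK : {rmorphism K -> F}) (q x y : F).

Definition eval_xy (s : mvar) (j : nat) : F := if s is mx then x else y.

Local Notation R := (@R_inv K).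
Local Notation lin_ext := (lin_ext inK q).
Local Notation phiD := (phiD R rho_AIO inK q eval_xy).

Lemma lin_ext_dpos g p s i w :
  lin_ext g (rmul (lmul p (rule_ext R (s, i, true))) w)
  = q ^+ i * g (reduce (p ++ [:: (my, i, true), (mx, i.+1, true) & w])).
Proof. by rewrite lin_ext_rmul /= lin_ext_seq1 qevalXn reduce_catl -catA. Qed.

Lemma lin_ext_dinv_x g p i w :
  lin_ext g (rmul (lmul p (rule_ext R (mx, i, false))) w)
  = - q ^+ i * g (reduce (p ++ [:: (mx, i, false), (my, i, true) & w])).
Proof.
rewrite lin_ext_rmul /= lin_ext_seq1 qevalM qevalN qeval1 qevalXn mulN1r.
by rewrite (reduce_cancel [:: _; _] (mx, i.+1, true) [::]) cats0 reduce_catr reduce_catl -catA.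
Qed.

Lemma lin_ext_dinv_y g p i w :
  lin_ext g (rmul (lmul p (rule_ext R (my, i, false))) w)
  = - q ^+ i * g (reduce (p ++ [:: (mx, i.+1, true), (my, i.+1, false) & w])).
Proof.
rewrite lin_ext_rmul /= lin_ext_seq1 qevalM qevalN qeval1 qevalXn mulN1r.
rewrite (reduce_cancel [::] (my, i, false)) [reduce (reduce ([::] ++ _) ++ _)]reduce_catl.
by rewrite reduce_catr reduce_catl -catA.
Qed.

Lemma phiDS_xinv_y_run m i W : pos_run i.+1 W ->
  phiD m.+1 [:: (mx, i, false), (my, i, true) & W]
  = q ^+ i * (phiD m [:: (mx, i, false), (my, i, true), (mx, i.+1, true) & up W]
              - phiD m [:: (mx, i, false), (my, i, true), (my, i.+1, true) & up W])
    + lin_ext (fun u => phiD m (rho_AIO u)) (dword R [:: (mx, i, false); (my, i, true)] W).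
Proof.
move=> rW; rewrite phiDS !dword_cons !lin_ext_cat lin_ext_dinv_x lin_ext_dpos /= addrA.
have rsW s : pos_run i.+1 ((s, i.+1, true) :: up W) by rewrite /= eqxx pos_run_up.
rewrite !rho_AIO_xinv_y_run ?rsW //; congr (_ + _).
by rewrite mulrBr addrC mulNr.
Qed.

Lemma phiD_xinv_y_prod_diffS m i n :
  lin_ext (fun w => phiD m.+1 [:: (mx, i, false), (my, i, true) & w]) (prod_diff mx my i.+1 n)
  = q ^+ i * lin_ext (fun w => phiD m [:: (mx, i, false), (my, i, true) & w])
                     (prod_diff mx my i.+1 n.+1).
Proof.
under eq_in_prod_diff => w rw _ do rewrite phiDS_xinv_y_run //.
rewrite lin_extD lin_ext_prod_diff_dword // addr0 lin_extZ lin_extB.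
by rewrite lin_ext_prod_diffS; congr (_ * (_ - _)); rewrite -[in RHS]lin_ext_prod_diff_up.
Qed.

Lemma phiD_xinv_y_prod_diff m i n :
  lin_ext (fun w => phiD m [:: (mx, i, false), (my, i, true) & w]) (prod_diff mx my i.+1 n)
  = q ^+ (i * m) * (x^-1 * y) * (x - y) ^+ (n + m).
Proof.
elim: m n => [|m IH] n.
  rewrite muln0 addn0 expr0 mul1r.
  under eq_lin_ext => w do rewrite phiD0 /eval_word !big_cons mulrA.
  by rewrite lin_extZ lin_ext_prod_diff_eval /= prodr_const_nat addKn.
by rewrite phiD_xinv_y_prod_diffS IH addSnnS mulnS [q ^+ (_ + _)]exprD !mulrA.
Qed.

Lemma phiDS_run_x_yinv m k w j : pos_run k w -> j = (k + size w)%N ->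
  phiD m.+1 (w ++ [:: (mx, j, true); (my, j, false)])
  = q ^+ j * (phiD m (w ++ [:: (my, j, true); (mx, j.+1, true); (my, j.+1, false)])
              - phiD m (w ++ [:: (mx, j, true); (mx, j.+1, true); (my, j.+1, false)]))
    + lin_ext (fun u => phiD m (rho_AIO (reduce (u ++ [:: (mx, j.+1, true); (my, j.+1, false)]))))
        (dword R [::] w).
Proof.
move=> rw jE; rewrite phiDS dword_cat lin_ext_cat lin_ext_rmul addrC; congr (_ + _).
rewrite !dword_cons !lin_ext_cat lin_ext_dpos lin_ext_dinv_y /= lin_ext_nil addr0.
by rewrite cat_rcons !(rho_AIO_run_x_yinv _ rw jE) mulrBr mulNr.
Qed.

Lemma phiD_prod_diff_x_yinvS m k n :
  lin_ext (fun w => phiD m.+1 (w ++ [:: (mx, (k + n)%N, true); (my, (k + n)%N, false)]))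
    (prod_diff my mx k n)
  = q ^+ (k + n)
    * lin_ext (fun w => phiD m (w ++ [:: (mx, (k + n.+1)%N, true); (my, (k + n.+1)%N, false)]))
        (prod_diff my mx k n.+1).
Proof.
under eq_in_prod_diff => w rw sw do rewrite (phiDS_run_x_yinv m rw) ?sw //.
rewrite lin_extD lin_ext_prod_diff_dword // addr0 lin_extZ lin_ext_prod_diffSr addnS.
by congr (_ * _); apply: eq_lin_ext => w; rewrite !cat_rcons.
Qed.

Lemma phiD_prod_diff_x_yinv m k n :
  lin_ext (fun w => phiD m (w ++ [:: (mx, (k + n)%N, true); (my, (k + n)%N, false)]))
    (prod_diff my mx k n)
  = q ^+ (m * (k + n) + 'C(m, 2)) * (x * y^-1) * (y - x) ^+ (n + m).
Proof.
elim: m n => [|m IH] n.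
  rewrite mul0n bin0n addn0 expr0 mul1r.
  under eq_lin_ext => w do rewrite phiD0 /eval_word big_cat /= !big_cons big_nil mulr1 mulrC.
  by rewrite lin_extZ lin_ext_prod_diff_eval /= prodr_const_nat addKn.
rewrite phiD_prod_diff_x_yinvS IH addSnnS !mulrA -exprD; congr (_ ^+ _ * _ / _ * _).
by rewrite binS bin1; lia.
Qed.

Lemma phiDS_xinv m i :
  phiD m.+1 [:: (mx, i, false)] = - q ^+ (i * m.+1) * (x^-1 * y) * (x - y) ^+ m.
Proof.
rewrite phiDS dword_cons lin_ext_cat lin_ext_dinv_x /= lin_ext_nil addr0.
have := phiD_xinv_y_prod_diff m i 0; rewrite lin_ext_prod_diff0 add0n.
by rewrite rho_AIO_xinv_y_run // => ->; rewrite mulnS exprD; ring.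
Qed.

Lemma phiDS_yinv m i :
  phiD m.+1 [:: (my, i, false)]
  = - q ^+ (i * m.+1 + 'C(m.+1, 2)) * (x * y^-1) * (y - x) ^+ m.
Proof.
rewrite phiDS dword_cons lin_ext_cat lin_ext_dinv_y /= lin_ext_nil addr0.
have := phiD_prod_diff_x_yinv m i.+1 0; rewrite lin_ext_prod_diff0 addn0 add0n /=.
rewrite rho_AIO_reduce => [->|]; last by rewrite /= /aio_lt /aio_key /= addn0 addn1 ltnSn.
have -> : (i * m.+1 + 'C(m.+1, 2) = i + (m * i.+1 + 'C(m, 2)))%N by rewrite binS bin1; lia.
by rewrite [q ^+ (i + _)]exprD !mulrA !mulNr.
Qed.

Lemma Gen_coef_xinv (hx : x != 0) (hxy : x - y != 0) i n :
  phiD n [:: (mx, i, false)] / qpoch q n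
  = fps_scale (x - y)^-1
      (fps_sub (fps_const 1) (fps_scale (x^-1 * y) (e_q q ((x - y) * q ^+ i)))) n.
Proof.
rewrite /fps_scale /fps_sub /fps_const /e_q; case: n => [|m].
  rewrite phiD0 /eval_word big_seq1 /eval_letter /qpoch big_geq //=.
  by field; rewrite oner_neq0 hx hxy.
rewrite phiDS_xinv exprMn -exprM mulnC exprS; set c := (qpoch q m.+1)^-1.
by field; rewrite hx hxy.
Qed.

Lemma Gen_coef_yinv (hy : y != 0) (hyx : y - x != 0) i n :
  phiD n [:: (my, i, false)] / qpoch q n
  = fps_scale (y - x)^-1
      (fps_sub (fps_const 1) (fps_scale (x * y^-1) (E_q q ((y - x) * q ^+ i)))) n.
Proof.
rewrite /fps_scale /fps_sub /fps_const /E_q; case: n => [|m].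
  rewrite phiD0 /eval_word big_seq1 /eval_letter /qpoch big_geq //=.
  by field; rewrite oner_neq0 hy hyx.
rewrite phiDS_yinv exprMn -exprM mulnC exprD exprS; set c := (qpoch q m.+1)^-1.
by field; rewrite hy hyx.
Qed.

End InverseGrammar.

Section RationalFunctions.
Variable K : idomainType.

Lemma KtoRF_is_zmod_morphism : zmod_morphism (@KtoRF K).
Proof. by move=> a b; rewrite /KtoRF !polyCB rmorphB. Qed.
HB.instance Definition _ :=
  GRing.isZmodMorphism.Build K (RF K) (@KtoRF K) KtoRF_is_zmod_morphism.

Lemma KtoRF_is_monoid_morphism : monoid_morphism (@KtoRF K).
Proof.
by split=> [|a b]; rewrite /KtoRF; [rewrite !polyC1 tofrac1 | rewrite !polyCM tofracM].
Qed.
HB.instance Definition _ :=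
  GRing.isMonoidMorphism.Build K (RF K) (@KtoRF K) KtoRF_is_monoid_morphism.

Definition KtoRF_rmorphism : {rmorphism K -> RF K} := @KtoRF K.

Lemma xRF_neq0 : xRF K != 0.
Proof. by rewrite /xRF tofrac_eq0 polyX_eq0. Qed.

Lemma yRF_neq0 : yRF K != 0.
Proof. by rewrite /yRF tofrac_eq0 polyC_eq0 polyX_eq0. Qed.

Lemma xRF_sub_yRF_neq0 : xRF K - yRF K != 0.
Proof. by rewrite /xRF /yRF -tofracB tofrac_eq0 polyXsubC_eq0. Qed.

End RationalFunctions.

Theorem corollary5p6 (K : idomainType) (charK : [pchar K] =i pred0) (i : nat) :
  let x := xRF K in let y := yRF K in let q := qRF K in
  Gen_inv [:: (1, [:: (mx, i, false)])]
    = fps_scale (x - y)^-1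
        (fps_sub (fps_const 1) (fps_scale (x^-1 * y) (e_q q ((x - y) * q ^+ i))))
  /\
  Gen_inv [:: (1, [:: (my, i, false)])]
    = fps_scale (y - x)^-1
        (fps_sub (fps_const 1) (fps_scale (x * y^-1) (E_q q ((y - x) * q ^+ i)))).
Proof.
move=> x y q; split; apply: functional_extensionality => n.
  exact: (Gen_coef_xinv (KtoRF_rmorphism K) q (xRF_neq0 K) (xRF_sub_yRF_neq0 K)).
have yx_neq0 : y - x != 0 by rewrite -opprB oppr_eq0 xRF_sub_yRF_neq0.
exact: (Gen_coef_yinv (KtoRF_rmorphism K) q (yRF_neq0 K) yx_neq0).
Qed.
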